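(* Let $a$ and $b$ be coprime positive integers, and put $N = a\left\lfloor \frac{b}{2}\right\rfloor + b\left\lfloor \frac{a}{2}\right\rfloor$. Let $R(a,b)$ be the set of integers $n$ with $0 \le n \le N$ such that $n = ax+by$ for some nonnegative integers $x,y$, and let $\mathrm{NR}(a,b)$ be the set of nonnegative integers that cannot be written as $ax+by$ with $x,y$ nonnegative integers. Then \[ R(a,b) = \left\{ai+bj : 0 \le i \le \Big\lfloor \frac{b}{2}\Big\rfloor,\ 0 \le j \le \Big\lfloor \frac{a}{2}\Big\rfloor \right\} \cup \left\{ N - |ai-bj| : 1 \le i \le \Big\lfloor \frac{b}{2}\Big\rfloor,\ 1 \le j \le \Big\lfloor \frac{a}{2}\Big\rfloor \right\}, \] and \[ \mathrm{NR}(a,b) = \{0,1,2,\dots,N\} \setminus R(a,b). \]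
   Context: A nonnegative integer is called representable (with respect to $a,b$) if it equals $ax+by$ for some nonnegative integers $x$ and $y$, and nonrepresentable otherwise. $\lfloor \cdot \rfloor$ denotes the floor function. *)

From mathcomp Require Import all_boot all_order all_algebra.
Set Implicit Arguments. Unset Strict Implicit. Unset Printing Implicit Defensive.

Definition representable (a b n : nat) : Prop :=
  exists x y : nat, n = a * x + b * y.

Definition bigN (a b : nat) : nat := a * b./2 + b * a./2.

Definition Rset (a b : nat) (n : nat) : Prop :=
  n <= bigN a b /\ representable a b n.

Definition NRset (a b : nat) (n : nat) : Prop := ~ representable a b n.

Definition S1 (a b : nat) (n : nat) : Prop :=
  exists i j : nat, i <= b./2 /\ j <= a./2 /\ n = a * i + b * j.

Definition S2 (a b : nat) (n : nat) : Prop :=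
  exists i j : nat, [/\ 1 <= i <= b./2, 1 <= j <= a./2 &
    (n%:Z = (bigN a b)%:Z - `|(a * i)%:Z - (b * j)%:Z|%R)%R].

From mathcomp Require Import all_boot all_order all_algebra.
From mathcomp Require Import zify.

(* Put B = b/2 and A = a/2.  Every representable n can be written
   n = a x + b y with x < b.  If x <= B and y <= A, n lies in the first set.
   If n <= N, x and y cannot both overshoot, and when one does, reflecting
   through (B, A), i.e. i = B - x, j = y - A (or symmetrically), gives
   n = N - |a i - b j|; conversely a (B - i) + b (A + j) = N - (a i - b j).
   For the second identity, N >= ab - (a + b)/2, so every n > N exceeds the
   Frobenius number ab - a - b and is representable by Sylvester's theorem. *)

Lemma half_double_bounds (n : nat) : (n./2).*2 <= n <= (n./2).*2.+1.
Proof. by rewrite -geq_half_double -leq_half_double !leqnn. Qed.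

Section Symmetry.

Variables a b : nat.

Lemma bigNC : bigN a b = bigN b a.
Proof. by rewrite /bigN addnC. Qed.

Lemma representableC (n : nat) : representable a b n <-> representable b a n.
Proof. by split=> -[x [y ->]]; exists y, x; rewrite addnC. Qed.

Lemma RsetC (n : nat) : Rset a b n <-> Rset b a n.
Proof. by rewrite /Rset bigNC representableC. Qed.

Lemma S2E (n : nat) :
  S2 a b n <-> exists i j, [/\ 1 <= i <= b./2, 1 <= j <= a./2 &
    n + maxn (a * i) (b * j) = bigN a b + minn (a * i) (b * j)].
Proof.
by split=> -[i [j [hi hj e]]]; exists i, j; split=> //; move: e; lia.
Qed.

End Symmetry.

Lemma S2C (a b n : nat) : S2 a b n <-> S2 b a n.
Proof.
by rewrite !S2E; split=> -[i [j [hi hj e]]]; exists j, i;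
  rewrite maxnC minnC bigNC.
Qed.

Section Classification.

Variables a b : nat.

Lemma S1_Rset (n : nat) : S1 a b n -> Rset a b n.
Proof.
move=> [i [j [le_iB [le_jA ->]]]]; split; last by exists i, j.
exact: leq_add (leq_mul (leqnn a) le_iB) (leq_mul (leqnn b) le_jA).
Qed.

Lemma Rset_reflect (n i j : nat) : i <= b./2 -> b * j <= a * i ->
  n + a * i = bigN a b + b * j -> Rset a b n.
Proof.
move=> le_iB le_ji e; have le_aiB : a * i <= a * b./2 by rewrite leq_mul.
rewrite /Rset; split; first by move: e; rewrite /bigN; lia.
by exists (b./2 - i), (a./2 + j); move: e; rewrite /bigN mulnBr mulnDr; lia.
Qed.

Lemma representable_reduced (n : nat) : 0 < b ->
  representable a b n -> exists x y, x < b /\ n = a * x + b * y.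
Proof.
move=> b_gt0 [x [y ->]]; exists (x %% b), (y + a * (x %/ b)).
by split; [rewrite ltn_mod | rewrite {1}(divn_eq x b); lia].
Qed.

Lemma leq_double_half_of_bigN (y : nat) : 0 < b ->
  b * y <= bigN a b -> y <= (a./2).*2.
Proof.
move=> b_gt0 le_by; rewrite leqNgt; apply/negP => lt_y.
have /andP[_ le_a] := half_double_bounds a.
have /andP[le_b _] := half_double_bounds b.
have le_by_lt : b * (a./2).*2.+1 <= b * y by rewrite leq_mul.
have le_ab : a * b <= (a./2).*2.+1 * b by rewrite leq_mul.
have le_aB : a * (b./2).*2 <= a * b by rewrite leq_mul.
by move: le_by; rewrite /bigN; lia.
Qed.

Lemma S2_reflect (x y : nat) :
  x < b./2 -> a./2 < y <= (a./2).*2 -> a * x + b * y <= bigN a b ->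
  S2 a b (a * x + b * y).
Proof.
move=> lt_xB /andP[lt_Ay le_y] le_n; apply/S2E.
exists (b./2 - x), (y - a./2).
have le_ax : a * x <= a * b./2 by rewrite leq_mul // ltnW.
have le_by : b * a./2 <= b * y by rewrite leq_mul // ltnW.
by rewrite !mulnBr; split; move: le_n; rewrite /bigN; lia.
Qed.

End Classification.

Lemma S2_Rset (a b n : nat) : S2 a b n -> Rset a b n.
Proof.
move=> /S2E [i [j [/andP[_ le_iB] /andP[_ le_jA] e]]].
have [le_ji | /ltnW le_ij] := leqP (b * j) (a * i).
- move: e; rewrite (maxn_idPl le_ji) (minn_idPr le_ji).
  exact: (@Rset_reflect a b n i j).
- move: e; rewrite (maxn_idPr le_ij) (minn_idPl le_ij) bigNC => e.
  by apply/RsetC; apply: (@Rset_reflect b a n j i).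
Qed.

Lemma Rset_S1_or_S2 (a b n : nat) : 0 < a -> 0 < b ->
  Rset a b n -> S1 a b n \/ S2 a b n.
Proof.
move=> a_gt0 b_gt0 [le_n rep_n].
have [x [y [lt_xb en]]] := @representable_reduced a b n b_gt0 rep_n.
rewrite {}en in le_n *.
have [le_xB | lt_Bx] := leqP x b./2; have [le_yA | lt_Ay] := leqP y a./2.
- by left; exists x, y.
- right; apply: S2_reflect => //.
  + rewrite ltn_neqAle le_xB andbT; apply/eqP => ex.
    have : b * a./2 < b * y by rewrite ltn_pmul2l.
    by move: le_n; rewrite /bigN ex; lia.
  + rewrite lt_Ay (@leq_double_half_of_bigN a b y b_gt0) //.
    exact: leq_trans (leq_addl _ _) le_n.
- right; apply/S2C; rewrite addnC; apply: S2_reflect => //.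
  + rewrite ltn_neqAle le_yA andbT; apply/eqP => ey.
    have : a * b./2 < a * x by rewrite ltn_pmul2l.
    by move: le_n; rewrite /bigN ey; lia.
  + have /andP[_ le_b] := half_double_bounds b.
    by rewrite lt_Bx -ltnS (leq_trans lt_xb).
  + by rewrite -bigNC addnC.
- have : a * b./2 < a * x by rewrite ltn_pmul2l.
  have : b * a./2 < b * y by rewrite ltn_pmul2l.
  by move: le_n; rewrite /bigN; lia.
Qed.

Section Sylvester.

Variables a b : nat.
Hypotheses (b_gt0 : 0 < b) (coprime_ab : coprime a b).

Lemma exists_mul_eqmod (n : nat) : exists2 x, x < b & a * x = n %[mod b].
Proof.
set m := chinese a b 0 n.
have dvd_am : a %| m by rewrite /dvdn /m chinese_modl // mod0n.
exists ((m %/ a) %% b); first by rewrite ltn_mod.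
by rewrite modnMmr mulnC divnK // chinese_modr.
Qed.

Lemma representable_gt_frobenius (n : nat) :
  a * b < n + a + b -> representable a b n.
Proof.
move=> lt_ab; have [x lt_xb ex] := exists_mul_eqmod n.
have le_axn : a * x <= n.
  rewrite leqNgt; apply/negP => lt_n.
  have : b %| a * x - n by rewrite -(eqn_mod_dvd _ (ltnW lt_n)) ex.
  move/dvdn_leq; rewrite subn_gt0 lt_n => /(_ isT) le_b.
  have : a * x.+1 <= a * b by rewrite leq_mul.
  by rewrite mulnS; move: le_b lt_ab; clear ex; lia.
have dvd_b : b %| n - a * x by rewrite -eqn_mod_dvd // ex.
by exists x, ((n - a * x) %/ b); rewrite [b * _]mulnC divnK // subnKC.
Qed.

Lemma bigN_frobenius_bound : (a * b).*2 <= (bigN a b).*2 + a + b.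
Proof.
have /andP[_ le_a] := half_double_bounds a.
have /andP[_ le_b] := half_double_bounds b.
have le_ab_b : a * b <= a * (b./2).*2.+1 by rewrite leq_mul.
have le_ab_a : a * b <= (a./2).*2.+1 * b by rewrite leq_mul.
by rewrite /bigN; lia.
Qed.

Lemma NRset_le_bigN (n : nat) : NRset a b n -> n <= bigN a b.
Proof.
move=> nrep; rewrite leqNgt; apply/negP => lt_n; apply/nrep.
by apply: representable_gt_frobenius; have := bigN_frobenius_bound; lia.
Qed.

End Sylvester.

Theorem theorem4 (a b : nat) (ha : 0 < a) (hb : 0 < b) (hab : coprime a b) :
  (forall n : nat, Rset a b n <-> (S1 a b n \/ S2 a b n)) /\
  (forall n : nat, NRset a b n <-> (n <= bigN a b /\ ~ Rset a b n)).
Proof.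
split=> n; split.
- exact: Rset_S1_or_S2.
- by case=> [/S1_Rset | /S2_Rset].
- by move=> nrep; split=> [|[]//]; apply: NRset_le_bigN.
- by case=> le_n notR rep; apply: notR.
Qed.
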